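(* Let $a_1,\dots,a_{m-1},c,b_1,\dots,b_{m-1}\in\mathbb C$ and $\bar u_2=y_1(a_1)\cdots y_{m-1}(a_{m-1})y_m(c)y_{m-1}(b_{m-1})\cdots y_1(b_1)$. Then for every $1\le l\le m-1$, $$r_l(\bar u_2):=\sum_{k=0}^{l}(-1)^k p_{l-k}(\bar u_2)\,p_{2m-1-l+k}(\bar u_2)=(a_1\cdots a_l)^2\,a_{l+1}\cdots a_{m-1}\,c\,b_{m-1}\cdots b_{l+1},$$ and consequently, when all $a_i,c,b_i$ are nonzero, $\dfrac{p_{l+1}p_{2m-1-l}}{r_l}(\bar u_2)$ equals $a_{l+1}+b_{l+1}$ if $l\le m-2$ and equals $c$ if $l=m-1$.
   Context: $m\ge2$. $E_{i,j}$ are the $2m\times2m$ matrix units; $f_i=E_{i+1,i}+E_{2m-i+1,2m-i}$ for $1\le i\le m-1$, $f_m=E_{m+1,m}$, $y_i(a)=\exp(af_i)$. For a $2m\times 2m$ matrix $g$, $p_k(g)=g_{2m,2m-k}$ for $0\le k\le 2m-1$. Empty products equal $1$. *)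

(* Matrices of size 2m over a characteristic-0 algebraically
   closed numeric field R (e.g. algC). Indices are 1-based as in
   the paper. *)
From HB Require Import structures.
From mathcomp Require Import all_boot all_order all_algebra.
Unset Printing Implicit Defensive.
Import Order.TTheory GRing.Theory Num.Theory.
Local Open Scope ring_scope.

Section Defs.
Variable R : numClosedFieldType.

Definition Eu (m i j : nat) : 'M[R]_(m.*2) :=
  \matrix_(r, s) ((r.+1 == i)%N && (s.+1 == j)%N)%:R.

Definition fgen (m i : nat) : 'M[R]_(m.*2) :=
  if i == m then Eu m (m + 1)%N m
  else Eu m (i + 1)%N i + Eu m (m.*2 - i + 1)%N (m.*2 - i)%N.

Definition mxpow (n : nat) (A : 'M[R]_n) (k : nat) : 'M[R]_n :=
  iter k (mulmx A) 1%:M.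

(* exponential of an n x n matrix, as the exponential series truncated at
   degree n; this equals exp(A) for every nilpotent A (A^n = 0), which is
   the case for all the a f_i used here. *)
Definition expmx (n : nat) (A : 'M[R]_n) : 'M[R]_n :=
  \sum_(k < n.+1) (k`!%:R)^-1 *: mxpow n A k.

Definition ygen (m i : nat) (a : R) : 'M[R]_(m.*2) := expmx (m.*2) (a *: fgen m i).

Definition ent (n : nat) (g : 'M[R]_n) (i j : nat) : R :=
  match i, j with
  | i'.+1, j'.+1 =>
    match @insub _ (fun k => k < n)%N 'I_n i', @insub _ (fun k => k < n)%N 'I_n j' with
    | Some i0, Some j0 => g i0 j0
    | _, _ => 0
    end
  | _, _ => 0
  end.

Definition pk (m k : nat) (g : 'M[R]_(m.*2)) : R := ent (m.*2) g (m.*2) (m.*2 - k)%N.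

Definition ubar2 (m : nat) (a : nat -> R) (c : R) (b : nat -> R) : 'M[R]_(m.*2) :=
  foldr (fun i acc => ygen m i (a i) *m acc) 1%:M (iota 1 m.-1)
  *m ygen m m c
  *m foldr (fun i acc => ygen m i (b i) *m acc) 1%:M (rev (iota 1 m.-1)).

Definition rl (m l : nat) (g : 'M[R]_(m.*2)) : R :=
  \sum_(k < l.+1) (-1) ^+ k * pk m (l - k)%N g * pk m (m.*2 - 1 - l + k)%N g.

End Defs.
Arguments Eu {R} m i j.
Arguments fgen {R} m i.
Arguments mxpow {R n} A k.
Arguments expmx {R n} A.
Arguments ygen {R} m i a.
Arguments ent {R n} g i j.
Arguments pk {R} m k g.
Arguments ubar2 {R} m a c b.
Arguments rl {R} m l g.

From HB Require Import structures.
From mathcomp Require Import all_boot all_order all_algebra.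
From mathcomp Require Import zify ring.
Import Order.TTheory GRing.Theory Num.Theory.
Local Open Scope ring_scope.

(* Every generator f_i squares to zero, so y_i(x) = 1 + x f_i,
   and right multiplication by y_i(x) changes the last row of a matrix g only
   in columns i and 2m-i: it adds x g_{2m,i+1} and x g_{2m,2m-i+1} there.
   Multiplying out ubar2 from the left therefore computes its last row, i.e.
   all the p_k, in closed form.  With A_k = a_1...a_k, B_s = b_s...b_{m-1}
   and C = c A_{m-1} we get
     p_0 = 1,  p_k = A_k + b_k A_{k-1}  (1 <= k <= m-1),
     p_k = C B_{2m-k}                    (m <= k <= 2m-1).
   Setting T_l = A_l B_{l+1} C, this gives p_0 p_{2m-1} = T_0 and
   p_{l+1} p_{2m-l-2} = T_{l+1} + T_l, so the alternating sum r_l telescopes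
   to T_l = A_l p_{2m-1-l}.  Both claims of the theorem follow: the first by
   expanding T_l, the second since p_{l+1} = A_l (a_{l+1} + b_{l+1}) for
   l <= m-2 and p_m = C = c A_{m-1}. *)

Section LastRowCalculus.
Variables (R : numClosedFieldType) (m : nat).
Local Notation n := (m.*2).

Lemma ent_ord (g : 'M[R]_n) (i j : 'I_n) : ent g i.+1 j.+1 = g i j.
Proof.
rewrite /ent.
case: (@insubP _ (fun k => (k < n)%N) 'I_n i) => [i0 _ Hi|]; last by rewrite ltn_ord.
case: (@insubP _ (fun k => (k < n)%N) 'I_n j) => [j0 _ Hj|]; last by rewrite ltn_ord.
by congr (g _ _); apply: val_inj.
Qed.

Lemma ent_out (g : 'M[R]_n) r j :
  ~~ ((0 < r <= n) && (0 < j <= n))%N -> ent g r j = 0.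
Proof.
rewrite /ent; case: r => [|r] //; case: j => [|j] //= H.
case: (@insubP _ (fun k => (k < n)%N) 'I_n r) => [i0 Hi _|] //.
case: (@insubP _ (fun k => (k < n)%N) 'I_n j) => [j0 Hj _|] //.
by move: H; rewrite Hi Hj.
Qed.

Lemma ent_index_ord {r j} : (0 < r <= n)%N -> (0 < j <= n)%N ->
  exists (i0 j0 : 'I_n), r = i0.+1 /\ j = j0.+1.
Proof.
move=> Hr Hj.
have hr : (r.-1 < n)%N by lia.
have hj : (j.-1 < n)%N by lia.
by exists (Ordinal hr), (Ordinal hj) => /=; split; lia.
Qed.

Lemma entD (g h : 'M[R]_n) r j : ent (g + h) r j = ent g r j + ent h r j.
Proof.
rewrite /ent; case: r => [|r]; first by rewrite addr0.
case: j => [|j]; first by rewrite addr0.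
case: (insub r : option 'I_n) => [i0|]; last by rewrite addr0.
case: (insub j : option 'I_n) => [j0|]; last by rewrite addr0.
by rewrite mxE.
Qed.

Lemma entZ (g : 'M[R]_n) x r j : ent (x *: g) r j = x * ent g r j.
Proof.
rewrite /ent; case: r => [|r]; first by rewrite mulr0.
case: j => [|j]; first by rewrite mulr0.
case: (insub r : option 'I_n) => [i0|]; last by rewrite mulr0.
case: (insub j : option 'I_n) => [j0|]; last by rewrite mulr0.
by rewrite mxE.
Qed.

Lemma ent_id r j : (0 < r <= n)%N ->
  ent (1%:M : 'M[R]_n) r j = if j == r then 1 else 0.
Proof.
move=> Hr; have [Hj|Hj] := boolP (0 < j <= n)%N; last first.
  rewrite ent_out; last by rewrite negb_and Hj orbT.
  by case: eqP => // ejr; move: Hj; rewrite ejr Hr.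
have [i0 [j0 [-> ->]]] := ent_index_ord Hr Hj.
by rewrite ent_ord mxE eqSS (inj_eq val_inj) eq_sym; case: eqP.
Qed.

Lemma ent_mulmx_Eu (g : 'M[R]_n) r j p q : (0 < p <= n)%N -> (0 < q <= n)%N ->
  ent (g *m Eu m p q) r j = if j == q then ent g r p else 0.
Proof.
move=> Hp Hq.
have [/andP[Hr Hj]|out] := boolP ((0 < r <= n) && (0 < j <= n))%N; last first.
  rewrite ent_out //; case: eqP => // ejq; rewrite ent_out //.
  by move: out; rewrite ejq Hq Hp !andbT.
have [i0 [j0 [-> ->]]] := ent_index_ord Hr Hj.
have [p0 [_ [ep _]]] := ent_index_ord Hp Hp.
rewrite ent_ord ep ent_ord mxE (bigD1 p0) //= big1 => [|k kp]; last first.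
  rewrite mxE; case: eqP => [e|]; last by rewrite mulr0.
  by move: kp; rewrite -(inj_eq val_inj) /= -eqSS e eqxx.
by rewrite mxE eqxx /= addr0; case: eqP => _; rewrite ?mulr1 ?mulr0.
Qed.

Lemma Eu_mul_eq0 p q p' q' : q != p' -> Eu m p q *m Eu m p' q' = 0 :> 'M[R]_n.
Proof.
move=> Hqp; apply/matrixP => i j; rewrite !mxE big1 // => k _.
rewrite !mxE; have [e|ne] := eqVneq k.+1 q; last by rewrite andbF mul0r.
have [e'|ne'] := eqVneq k.+1 p'; last by rewrite /= mulr0.
by move: Hqp; rewrite -e -e' eqxx.
Qed.

Lemma fgen_sqr i : (0 < i <= m)%N -> fgen m i *m fgen m i = 0 :> 'M[R]_n.
Proof.
move=> Hi; rewrite /fgen; case: eqP => [_|ne].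
  by apply: Eu_mul_eq0; apply/eqP; lia.
by rewrite !mulmxDl !mulmxDr !Eu_mul_eq0 ?addr0 //; apply/eqP; lia.
Qed.

Lemma expmx_sqr0 (A : 'M[R]_n) : (0 < m)%N -> A *m A = 0 -> expmx A = 1%:M + A.
Proof.
move=> Hm AA0; rewrite /expmx -(big_mkord xpredT (fun k => (k`!%:R)^-1 *: mxpow A k)).
rewrite (big_ltn (ltn0Sn _)) (big_ltn (_ : 1 < n.+1)%N); last by lia.
rewrite big_nat big1 => [|k /andP[k2 _]]; last first.
  case: k k2 => [|[|k]] // _.
  by rewrite /mxpow !iterS mulmxA AA0 mul0mx scaler0.
by rewrite /mxpow /= invr1 !scale1r mulmx1 addr0.
Qed.

Lemma ygenE i x : (0 < i <= m)%N -> ygen m i x = 1%:M + x *: fgen m i :> 'M[R]_n.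
Proof.
move=> Hi; rewrite /ygen expmx_sqr0; first by [].
  by lia.
by rewrite -scalemxAl -scalemxAr fgen_sqr // !scaler0.
Qed.

Lemma ent_last_mul_ygen (g : 'M[R]_n) i x j : (0 < i < m)%N ->
  ent (g *m ygen m i x) n j = ent g n j +
    x * ((if j == i then ent g n i.+1 else 0)
         + (if j == (n - i)%N then ent g n (n - i).+1 else 0)).
Proof.
move=> Hi; rewrite ygenE; last by lia.
rewrite mulmxDr mulmx1 entD -scalemxAr entZ /fgen.
have -> : (i == m) = false by apply/eqP; lia.
have -> : (n - i + 1 = (n - i).+1)%N by lia.
by rewrite mulmxDr entD !ent_mulmx_Eu ?addn1 //; lia.
Qed.

Lemma ent_last_mul_ygen_mid (g : 'M[R]_n) x j : (0 < m)%N ->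
  ent (g *m ygen m m x) n j =
    ent g n j + x * (if j == m then ent g n m.+1 else 0).
Proof.
move=> Hm; rewrite ygenE; last by lia.
by rewrite mulmxDr mulmx1 entD -scalemxAr entZ /fgen eqxx ent_mulmx_Eu ?addn1 //; lia.
Qed.

End LastRowCalculus.

Lemma alternating_sum_telescope (R : comPzRingType) (p q T : nat -> R) L :
  p 0%N * q 1%N = T 0%N ->
  (forall s, (s < L)%N -> p s.+1 * q s.+2 = T s.+1 + T s) ->
  forall l, (l <= L)%N ->
    \sum_(k < l.+1) (-1) ^+ k * p (l - k)%N * q (l - k).+1 = T l.
Proof.
move=> T0 TS; elim => [|l IHl] Hl; first by rewrite big_ord1 expr0 mul1r.
rewrite big_ord_recl /= expr0 mul1r subn0.
under eq_bigr => k _ do rewrite /bump /= add1n subSS exprS mulN1r !mulNr.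
by rewrite sumrN IHl 1?TS ?addrK //; lia.
Qed.

Lemma prod_nat_neq0 (R : idomainType) (F : nat -> R) i0 i1 :
  (forall i, (i0 <= i < i1)%N -> F i != 0) -> \prod_(i0 <= i < i1) F i != 0.
Proof.
move=> nzF; rewrite prodf_seq_neq0; apply/allP => i.
by rewrite mem_index_iota => /nzF.
Qed.

Section Ubar2LastRow.
Variables (R : numClosedFieldType) (m : nat) (a b : nat -> R) (c : R).
Local Notation n := (m.*2).

Definition yprod (F : nat -> R) (s : seq nat) : 'M[R]_n :=
  foldr (fun i acc => ygen m i (F i) *m acc) 1%:M s.

Lemma yprod_cat F s1 s2 : yprod F (s1 ++ s2) = yprod F s1 *m yprod F s2.
Proof. by elim: s1 => [|x s IHs] /=; rewrite ?mul1mx // IHs mulmxA. Qed.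

Lemma yprod_rcons F s x : yprod F (rcons s x) = yprod F s *m ygen m x (F x).
Proof. by rewrite -cats1 yprod_cat /= mulmx1. Qed.

Definition aprod (k : nat) : R := \prod_(1 <= i < k.+1) a i.
Definition bprod (s : nat) : R := \prod_(s <= i < m) b i.

Lemma ent_last_yprod_a k j : (k < m)%N ->
  ent (yprod a (iota 1 k)) n j = if (n - k <= j <= n)%N then aprod (n - j) else 0.
Proof.
elim: k j => [|k IHk] j Hk.
  rewrite /= ent_id ?subn0; last by lia.
  case: eqP => [->|nejn]; first by rewrite leqnn subnn /aprod big_geq.
  by case: ifP => // H; case: nejn; lia.
have -> : iota 1 k.+1 = iota 1 k ++ [:: k.+1].
  by rewrite -[in LHS](addn1 k) iotaD add1n.
rewrite yprod_cat /= mulmx1 ent_last_mul_ygen; last by lia.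
rewrite !IHk; try lia.
have -> : (n - k <= k.+2 <= n)%N = false by lia.
have -> : (n - k <= (n - k.+1).+1 <= n)%N by lia.
have -> : (n - (n - k.+1).+1 = k)%N by lia.
rewrite if_same add0r; case: eqP => [->|nejk].
  have -> : (n - k <= n - k.+1)%N = false by lia.
  rewrite leq_subr leqnn /= add0r subKn; last by lia.
  by rewrite /aprod [in RHS]big_nat_recr //= mulrC.
by rewrite mulr0 addr0; case: ifP; case: ifP => //; lia.
Qed.

Hypothesis m_gt0 : (0 < m)%N.

Definition ubar2_left : 'M[R]_n := yprod a (iota 1 (m - 1)) *m ygen m m c.

Lemma ent_last_ubar2_left j : ent ubar2_left n j =
  if (n - (m - 1) <= j <= n)%N then aprod (n - j)
  else if j == m then c * aprod (m - 1) else 0.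
Proof.
rewrite /ubar2_left ent_last_mul_ygen_mid; last by lia.
rewrite !ent_last_yprod_a; try lia.
have -> : (n - (m - 1) <= m.+1 <= n)%N by lia.
have -> : (n - m.+1 = m - 1)%N by lia.
case: eqP => [->|_]; last by rewrite mulr0 addr0.
have -> : (n - (m - 1) <= m <= n)%N = false by lia.
by rewrite add0r.
Qed.

Definition ubar2_right (k : nat) : 'M[R]_n := yprod b (rev (iota (m - k) k)).

Lemma ubar2_rightS k : (k < m)%N ->
  ubar2_right k.+1 = ubar2_right k *m ygen m (m - k.+1) (b (m - k.+1)).
Proof.
move=> Hk; rewrite /ubar2_right -yprod_rcons.
have -> : (m - k = (m - k.+1).+1)%N by lia.
by rewrite /= rev_cons.
Qed.

Lemma ent_last_ubar2_partial k j : (k <= m - 1)%N ->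
  ent (ubar2_left *m ubar2_right k) n j =
  if (n - m < j <= n)%N then
    aprod (n - j) + (if (m - k <= n - j)%N then b (n - j) * aprod (n - j).-1 else 0)
  else if (m - k <= j <= m)%N then c * aprod (m - 1) * bprod j else 0.
Proof.
elim: k j => [|k IHk] j Hk.
  rewrite /ubar2_right subn0 /= mulmx1 ent_last_ubar2_left.
  case: ifP => j_high.
    have -> : (n - m < j <= n)%N by lia.
    have -> : (m <= n - j)%N = false by lia.
    by rewrite addr0.
  case: eqP => [->|nejm].
    have -> : (n - m < m <= n)%N = false by lia.
    by rewrite leqnn /bprod big_geq // mulr1.
  case: ifP => j_upper; first by lia.
  by case: ifP => // j_mid; case: nejm; lia.
rewrite ubar2_rightS; last by lia.
rewrite mulmxA ent_last_mul_ygen; last by lia.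
rewrite !IHk; try lia.
set i := (m - k.+1)%N.
have -> : (n - m < i.+1 <= n)%N = false by lia.
have -> : (m - k <= i.+1 <= m)%N by lia.
have -> : (n - m < (n - i).+1 <= n)%N by lia.
have -> : (m - k <= n - (n - i).+1)%N = false by lia.
have -> : (n - (n - i).+1 = i.-1)%N by lia.
case: eqP => [->|neji].
  have -> : (n - m < i <= n)%N = false by lia.
  have -> : (m - k <= i <= m)%N = false by lia.
  have -> : (i == n - i)%N = false by apply/eqP; lia.
  have -> : (m - k.+1 <= i <= m)%N by lia.
  rewrite add0r addr0 /bprod (big_ltn (_ : i < m)%N); last by lia.
  have -> : i.+1 = (m - k)%N by lia.
  by rewrite mulrCA mulrA.
rewrite add0r; case: eqP => [->|nejni].
  have -> : (n - m < n - i <= n)%N by lia.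
  have -> : (m - k <= n - (n - i))%N = false by lia.
  have -> : (n - (n - i) = i)%N by lia.
  have -> : (m - k.+1 <= i)%N by lia.
  by rewrite !addr0.
rewrite [b i * _]mulr0 addr0.
have -> : (i <= n - j)%N = (m - k <= n - j)%N.
  by apply/idP/idP => ?; lia.
have -> : (i <= j <= m)%N = (m - k <= j <= m)%N.
  by apply/idP/idP => ?; lia.
by [].
Qed.

Local Notation u := (ubar2 m a c b).

Lemma ubar2_split : u = ubar2_left *m ubar2_right (m - 1).
Proof.
rewrite /ubar2 /ubar2_left /ubar2_right /yprod -subn1.
by have -> : (m - (m - 1) = 1)%N by lia.
Qed.

Lemma pk_ubar2_low k : (k <= m - 1)%N ->
  pk m k u = aprod k + (if (1 <= k)%N then b k * aprod k.-1 else 0).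
Proof.
move=> Hk; rewrite /pk ubar2_split ent_last_ubar2_partial //.
have -> : (n - m < n - k <= n)%N by lia.
have -> : (n - (n - k) = k)%N by lia.
by have -> : (m - (m - 1) = 1)%N by lia.
Qed.

Lemma pk_ubar2_high k : (m <= k <= n - 1)%N ->
  pk m k u = c * aprod (m - 1) * bprod (n - k).
Proof.
move=> Hk; rewrite /pk ubar2_split ent_last_ubar2_partial //.
have -> : (n - m < n - k <= n)%N = false by lia.
by have -> : (m - (m - 1) <= n - k <= m)%N by lia.
Qed.

End Ubar2LastRow.
Arguments aprod {R} a k.
Arguments bprod {R} m b s.

Section Ubar2Minors.
Variables (R : numClosedFieldType) (m : nat) (a b : nat -> R) (c : R).
Hypothesis m_gt0 : (0 < m)%N.
Local Notation n := (m.*2).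
Local Notation u := (ubar2 m a c b).
Local Notation aprod := (aprod a).
Local Notation bprod := (bprod m b).

Lemma rl_ubar2 l : (l <= m - 1)%N -> rl m l u = aprod l * pk m (n - 1 - l) u.
Proof.
move=> Hl; rewrite /rl.
rewrite (eq_bigr (fun k : 'I_l.+1 =>
    (-1) ^+ k * pk m (l - k)%N u * pk m (n - (l - k).+1)%N u)); last first.
  move=> k _; have Hk := ltn_ord k.
  by have -> : (n - 1 - l + k = n - (l - k).+1)%N by lia.
apply: (@alternating_sum_telescope _ (fun s => pk m s u) (fun s => pk m (n - s) u)
          (fun s => aprod s * pk m (n - 1 - s) u) (m - 1)%N) => //.
  by rewrite pk_ubar2_low //= addr0 subn0.
move=> s Hs; rewrite pk_ubar2_low //.
rewrite !pk_ubar2_high //; try lia.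
have -> : (n - (n - s.+2) = s.+2)%N by lia.
have -> : (n - (n - 1 - s.+1) = s.+2)%N by lia.
have -> : (n - (n - 1 - s) = s.+1)%N by lia.
rewrite /bprod (big_ltn (_ : s.+1 < m)%N) /=; last by lia.
rewrite /aprod; ring.
Qed.

Lemma rl_ubar2_prod l : (l <= m - 1)%N ->
  rl m l u = (\prod_(1 <= i < l.+1) a i) ^+ 2 * (\prod_(l.+1 <= i < m) a i) * c
             * (\prod_(l.+1 <= i < m) b i).
Proof.
move=> Hl; rewrite rl_ubar2 // pk_ubar2_high //; last by lia.
have -> : (n - (n - 1 - l) = l.+1)%N by lia.
have -> : aprod (m - 1) = aprod l * \prod_(l.+1 <= i < m) a i.
  rewrite /aprod subn1 prednK; last by lia.
  by rewrite (big_cat_nat _ (n := l.+1)) //; lia.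
by rewrite /aprod /bprod; ring.
Qed.

Lemma pk_ubar2_succ l : (l <= m - 1)%N ->
  pk m l.+1 u = aprod l * (if (l.+1 < m)%N then a l.+1 + b l.+1 else c).
Proof.
move=> Hl; case: ifP => Hlm.
  rewrite pk_ubar2_low //; last by lia.
  by rewrite /aprod big_nat_recr //=; ring.
have el : l = (m - 1)%N by lia.
rewrite pk_ubar2_high //; last by lia.
have -> : (n - l.+1 = m)%N by lia.
by rewrite /bprod big_geq // mulr1 el mulrC.
Qed.

End Ubar2Minors.

Theorem mainTheorem7 (R : numClosedFieldType) (m : nat) (hm : (2 <= m)%N)
    (a : nat -> R) (c : R) (b : nat -> R) (l : nat)
    (hl1 : (1 <= l)%N) (hl2 : (l <= m - 1)%N) :
  let u := ubar2 m a c b in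
  rl m l u =
    (\prod_(1 <= i < l.+1) a i) ^+ 2 * (\prod_(l.+1 <= i < m) a i) * c
      * (\prod_(l.+1 <= i < m) b i)
  /\ ((forall i, (1 <= i <= m - 1)%N -> a i != 0 /\ b i != 0) -> c != 0 ->
      pk m l.+1 u * pk m (m.*2 - 1 - l)%N u / rl m l u =
        (if (l <= m - 2)%N then a l.+1 + b l.+1 else c)).
Proof.
have m_gt0 : (0 < m)%N by lia.
move=> u; split; first exact: rl_ubar2_prod.
move=> nz_ab nz_c.
have nz_a i : (1 <= i <= m - 1)%N -> a i != 0 by case/nz_ab.
have nz_b i : (1 <= i <= m - 1)%N -> b i != 0 by case/nz_ab.
have nz_A : aprod a l != 0 by apply: prod_nat_neq0 => i Hi; apply: nz_a; lia.
have nz_p : pk m (m.*2 - 1 - l) u != 0.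
  rewrite pk_ubar2_high //; last by lia.
  rewrite !mulf_neq0 //.
  - by apply: prod_nat_neq0 => i Hi; apply: nz_a; lia.
  - by apply: prod_nat_neq0 => i Hi; apply: nz_b; lia.
have -> : (l <= m - 2)%N = (l.+1 < m)%N by lia.
rewrite rl_ubar2 // pk_ubar2_succ //.
by field; rewrite nz_A nz_p.
Qed.
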